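(* Let $\eta>0,\lambda>0$ with $\eta\lambda<1$, let $x(t)\ne0$ and $x(t+1)=(1-\eta\lambda)x(t)-\eta\nabla L(x(t))$. Then $$L(x(t))-L(x(t+1))\ge \eta\left(\frac{1}{1-\eta\lambda}-\frac{\rho\eta}{2\|x(t)\|_2^2(1-\eta\lambda)^2}\right)\|\nabla L(x(t))\|_2^2 .$$ If moreover $\eta\lambda\le\tfrac12$, then $$L(x(t))-L(x(t+1))\ge \eta\left(1-\frac{2\rho\eta}{\|x(t)\|_2^2}\right)\|\nabla L(x(t))\|_2^2 .$$
   Context: $L:\mathbb{R}^d\setminus\{0\}\to\mathbb{R}$ is $C^2$ and scale invariant, i.e. $L(cx)=L(x)$ for all $c>0$ and $x\neq0$. $\rho:=\max_{\|x\|_2=1}\|\nabla^2L(x)\|_2$ (spectral norm). *)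

From HB Require Import structures.
From mathcomp Require Import all_boot all_order all_algebra.
From mathcomp Require Import all_classical all_reals all_analysis.
Set Implicit Arguments. Unset Strict Implicit. Unset Printing Implicit Defensive.
Import Order.TTheory GRing.Theory Num.Theory.
Import numFieldNormedType.Exports.
Local Open Scope classical_set_scope.
Local Open Scope ring_scope.

Section Defs.
Variables (R : realType) (d : nat).

Definition ebasis (i : 'I_d) : 'rV[R]_d := delta_mx 0 i.

Definition enorm (v : 'rV[R]_d) : R := Num.sqrt (\sum_i v 0 i ^+ 2).

Definition grad (L : 'rV[R]_d -> R) (x : 'rV[R]_d) : 'rV[R]_d :=
  \row_i ('D_(ebasis i) L x).

Definition hess (L : 'rV[R]_d -> R) (x : 'rV[R]_d) : 'M[R]_d :=
  \matrix_(i, j) ('D_(ebasis j) (fun y => 'D_(ebasis i) L y) x).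

Definition specnorm (A : 'M[R]_d) : R :=
  sup [set enorm (u *m A^T) | u in [set u : 'rV[R]_d | enorm u = 1]].

Definition C2_off0 (L : 'rV[R]_d -> R) : Prop :=
  forall x : 'rV[R]_d, x != 0 ->
    [/\ differentiable L x,
        (forall i, differentiable (fun y => 'D_(ebasis i) L y) x)
      & {for x, continuous (hess L)}].

Definition scale_invariant (L : 'rV[R]_d -> R) : Prop :=
  forall (c : R) (x : 'rV[R]_d), 0 < c -> x != 0 -> L (c *: x) = L x.

(* rho := max_{||x||_2 = 1} ||hess L x||_2 (written as a sup; the max is attained
   since the Hessian is continuous on the compact unit sphere) *)
Definition rho (L : 'rV[R]_d -> R) : R :=
  sup [set specnorm (hess L x) | x in [set x : 'rV[R]_d | enorm x = 1]].

End Defs.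

From HB Require Import structures.
From mathcomp Require Import all_boot all_order all_algebra.
From mathcomp Require Import all_classical all_reals all_analysis.
From mathcomp Require Import ring lra.
Import Order.TTheory GRing.Theory Num.Theory.
Import numFieldNormedType.Exports.
Set Implicit Arguments.
Unset Strict Implicit.
Unset Printing Implicit Defensive.

(* Scale invariance gives Euler's identity <x, grad L x> = 0 and makes the
   Hessian homogeneous of degree -2, so |hess L y| <= rho / |y|^2 for y != 0.
   Writing c = eta / (1 - eta lambda), the update is (1 - eta lambda) times the
   plain gradient step x - c grad L x, hence has the same loss.  By
   orthogonality the segment from x to x - c grad L x stays outside the ball of
   radius |x|, where the second derivative of L along the segment is at most
   rho |grad L x|^2 / |x|^2; a second-order Taylor bound gives the first
   inequality.  The second one follows because 1 <= 1 / (1 - eta lambda) <= 2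
   when eta lambda <= 1/2. *)

Local Open Scope classical_set_scope.
Local Open Scope ring_scope.

Section EuclideanNorm.
Variables (R : realType) (d : nat).
Implicit Types (u v w : 'rV[R]_d).

Definition dotp u v : R := \sum_i u 0 i * v 0 i.

Lemma dotpC u v : dotp u v = dotp v u.
Proof. by apply: eq_bigr => i _; rewrite mulrC. Qed.

Lemma dotpDl u w v : dotp (u + w) v = dotp u v + dotp w v.
Proof. by rewrite /dotp -big_split; apply: eq_bigr => i _; rewrite mxE mulrDl. Qed.

Lemma dotpZl (c : R) u v : dotp (c *: u) v = c * dotp u v.
Proof. by rewrite /dotp mulr_sumr; apply: eq_bigr => i _; rewrite mxE mulrA. Qed.

Lemma dotpNl u v : dotp (- u) v = - dotp u v.
Proof. by rewrite -scaleN1r dotpZl mulN1r. Qed.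

Lemma dotpDr u v w : dotp u (v + w) = dotp u v + dotp u w.
Proof. by rewrite dotpC dotpDl !(dotpC u). Qed.

Lemma dotpZr (c : R) u v : dotp u (c *: v) = c * dotp u v.
Proof. by rewrite dotpC dotpZl dotpC. Qed.

Lemma dotpNr u v : dotp u (- v) = - dotp u v.
Proof. by rewrite dotpC dotpNl dotpC. Qed.

Lemma dotp0l v : dotp 0 v = 0.
Proof. by rewrite -(scale0r 0) dotpZl mul0r. Qed.

Lemma dotpp_ge0 u : 0 <= dotp u u.
Proof. by apply: sumr_ge0 => i _; rewrite -expr2 sqr_ge0. Qed.

Lemma enorm_sqr u : enorm u ^+ 2 = dotp u u.
Proof.
rewrite /enorm sqr_sqrtr; last by apply: sumr_ge0 => i _; rewrite sqr_ge0.
by apply: eq_bigr => i _; rewrite expr2.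
Qed.

Lemma enorm_ge0 u : 0 <= enorm u.
Proof. exact: sqrtr_ge0. Qed.

Lemma enorm0 : enorm (0 : 'rV[R]_d) = 0.
Proof. by rewrite /enorm big1 ?sqrtr0 // => i _; rewrite mxE expr0n. Qed.

Lemma enorm_eq0 u : (enorm u == 0) = (u == 0).
Proof.
apply/idP/eqP => [|->]; last by rewrite enorm0.
rewrite -sqrf_eq0 enorm_sqr psumr_eq0 => [/allP uu|i _]; last first.
  by rewrite -expr2 sqr_ge0.
apply/rowP => i; rewrite mxE; apply/eqP.
by rewrite -sqrf_eq0 expr2; exact: uu i (mem_index_enum i).
Qed.

Lemma enorm_gt0 u : (0 < enorm u) = (u != 0).
Proof. by rewrite lt_neqAle enorm_ge0 andbT eq_sym enorm_eq0. Qed.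

Lemma enormZ (c : R) u : enorm (c *: u) = `|c| * enorm u.
Proof.
apply: (pexpIrn (n := 2)) => //; rewrite ?nnegrE ?mulr_ge0 ?enorm_ge0 //.
by rewrite exprMn real_normK ?num_real // !enorm_sqr dotpZl dotpZr mulrA -expr2.
Qed.

Lemma enorm_normalize u : u != 0 -> enorm ((enorm u)^-1 *: u) = 1.
Proof.
rewrite -enorm_gt0 => u0.
by rewrite enormZ ger0_norm ?invr_ge0 ?ltW // mulVf // gt_eqF.
Qed.

Lemma enormN u : enorm (- u) = enorm u.
Proof. by rewrite -scaleN1r enormZ normrN normr1 mul1r. Qed.

Lemma enorm_sqrD_orth u v : dotp u v = 0 ->
  enorm (u + v) ^+ 2 = enorm u ^+ 2 + enorm v ^+ 2.
Proof.
by move=> uv; rewrite !enorm_sqr dotpDl !dotpDr (dotpC v u) uv addr0 add0r.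
Qed.

Lemma orth_addr_neq0 u v : u != 0 -> dotp u v = 0 -> u + v != 0.
Proof.
move=> u0 uv; apply/eqP => uv0; move: u0.
have := enorm_sqrD_orth uv; rewrite uv0 enorm0 expr0n => /esym/eqP.
by rewrite paddr_eq0 ?sqr_ge0 // sqrf_eq0 enorm_eq0 => /andP[/eqP-> _]; rewrite eqxx.
Qed.

Lemma dim_gt0_rV u : u != 0 -> (0 < d)%N.
Proof. by case: d u => [u|//]; rewrite (_ : u = 0) ?eqxx //; apply/rowP => -[]. Qed.

Lemma dotp_le_enorm u v : dotp u v <= enorm u * enorm v.
Proof.
have [->|u0] := eqVneq u 0; first by rewrite dotp0l mulr_ge0 ?enorm_ge0.
have [->|v0] := eqVneq v 0.
  by rewrite dotpC dotp0l mulr_ge0 ?enorm_ge0.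
set a := enorm u; set b := enorm v.
have ab : 0 < a * b by rewrite mulr_gt0 ?enorm_gt0.
(* Expand [0 <= |b u - a v|^2]. *)
have : 0 <= dotp (b *: u - a *: v) (b *: u - a *: v) by exact: dotpp_ge0.
rewrite dotpDl !dotpDr !dotpNl !dotpNr !dotpZl !dotpZr (dotpC v u).
rewrite -!enorm_sqr -/a -/b => H.
have : 0 <= (a * b) * (a * b - dotp u v) by nra.
by rewrite pmulr_rge0 // subr_ge0.
Qed.

Lemma enorm_ebasis (i : 'I_d) : enorm (ebasis R i) = 1.
Proof.
rewrite /enorm (bigD1 i) //= big1 ?addr0.
  by rewrite /ebasis mxE !eqxx expr1n sqrtr1.
by move=> j ji; rewrite /ebasis mxE eqxx (negbTE ji) expr0n.
Qed.

Lemma enorm1_coord_le1 u i : enorm u = 1 -> `|u 0 i| <= 1.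
Proof.
move=> u1; rewrite -(ler_pXn2r (n := 2)) ?nnegrE // real_normK ?num_real //.
rewrite -[1 ^+ 2]/(1 ^+ 2 : R) -u1 enorm_sqr /dotp (bigD1 i) //= expr2 lerDl.
by apply: sumr_ge0 => j _; rewrite -expr2 sqr_ge0.
Qed.

Lemma enorm_continuous : continuous (@enorm R d).
Proof.
move=> v; apply: continuous_comp; last exact: sqrt_continuous.
apply: (@continuous_big _ _ _ _ _ add_continuous) => i _ w.
by under eq_fun do rewrite expr2; apply: continuousM; apply: coord_continuous.
Qed.

Lemma compact_unit_sphere : compact [set u : 'rV[R]_d | enorm u = 1].
Proof.
apply: bounded_closed_compact.
  exists 1; split; first exact: num_real.
  move=> M M1 v /= v1; rewrite [`|v|]/Num.Def.normr /= mx_normrE.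
  apply/bigmax_leP; split; first lra.
  case=> i j _ /=; rewrite (ord1 i).
  by have := enorm1_coord_le1 j v1; lra.
apply: (@preimage_closed _ _ (@enorm R d) [set x : R | x = 1]).
  by move=> x _; exact: enorm_continuous.
exact: closed_eq.
Qed.

End EuclideanNorm.

Section SecondOrderBound.
Variable R : realType.
Implicit Types (f df : R -> R).

Lemma is_derive_ge0_le f df (a b : R) :
  (forall s : R, is_derive s 1 f (df s)) -> (forall s, a < s < b -> 0 <= df s) ->
  a <= b -> f a <= f b.
Proof.
move=> fdf df0 ab; apply: ger0_derive1_ndecr => //.
- by move=> s; rewrite in_itv /= => /df0; rewrite derive1E derive_val.
- by apply: derivable_within_continuous => s _.
Qed.

Lemma taylor2_le f f' f'' (M s : R) :
  (forall t : R, is_derive t 1 f (f' t)) ->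
  (forall t : R, is_derive t 1 f' (f'' t)) ->
  (forall t, 0 < t < s -> f'' t <= M) -> 0 <= s ->
  f s <= f 0 + f' 0 * s + M * s ^+ 2 / 2.
Proof.
move=> df df' f''M s0.
have f'_le t : 0 < t < s -> f' t <= f' 0 + M * t.
  case/andP=> t0 ts.
  suff : (cst M * id - f') 0 <= (cst M * id - f') t.
    by rewrite !fctE /cst; lra.
  apply: (is_derive_ge0_le (df := fun u => M - f'' u)) => //; last lra.
    move=> u; apply: is_derive_eq.
    by rewrite /cst /= scaler0 addr0 [_ *: 1]mulr1.
  move=> u /andP[u0 ut]; rewrite subr_ge0; apply: f''M; lra.
suff : (cst (f' 0) * id + cst (M / 2) * id ^+ 2 - f) 0 <=
       (cst (f' 0) * id + cst (M / 2) * id ^+ 2 - f) s.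
  by rewrite !fctE /cst /= mulr0 expr0n /= mulr0 addr0 sub0r; lra.
apply: (is_derive_ge0_le (df := fun u => f' 0 + M * u - f' u)) => //.
  move=> u; apply: is_derive_eq.
  rewrite /cst /= !scaler0 !addr0 ![_%:A]mulr1 expr1 -[_ *: _]/(_ * _).
  by rewrite mulrA divfK ?pnatr_eq0.
move=> u /andP[u0 us]; have := f'_le u; lra.
Qed.

End SecondOrderBound.

Section DirectionalDerivative.
Variables (R : numFieldType) (V W : normedModType R).
Implicit Types (F : V -> W) (a v : V).

Lemma derive_line F a v (s : R) :
  'D_1 (fun t : R => F (a + t *: v)) s = 'D_v F (a + s *: v).
Proof.
rewrite /derive; do 2 f_equal; apply/funext => h /=.
by rewrite /shift /= -[h *: 1]/(h * 1) mulr1 scalerDl addrCA.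
Qed.

Lemma is_derive_line F a v (s : R) : derivable F (a + s *: v) v ->
  is_derive s 1 (fun t : R => F (a + t *: v)) ('D_v F (a + s *: v)).
Proof.
move=> dF; rewrite -derive_line; apply: derivableP; apply/derivable1P.
rewrite (_ : (fun h : R => F (a + (h%:A + s) *: v)) =
             (fun h : R => F (h *: v + (a + s *: v)))).
  by move/derivable1P: dF.
by apply/funext => h; rewrite [_%:A]mulr1 scalerDl addrCA addrA.
Qed.

Lemma derive_compZ F (c : R) a v :
  'D_v (fun w => F (c *: w)) a = 'D_(c *: v) F (c *: a).
Proof.
rewrite /derive (_ : (fun h : R =>
    h^-1 *: (((fun w => F (c *: w)) \o shift a) (h *: v) - (fun w => F (c *: w)) a))
  = (fun h : R => h^-1 *: ((F \o shift (c *: a)) (h *: (c *: v)) - F (c *: a)))) //.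
apply/funext => h /=; rewrite /shift /=; congr (_ *: (F _ - _)).
by rewrite scalerDr !scalerA mulrC.
Qed.

Lemma derive_dirZ F (c : R) a v :
  differentiable F a -> 'D_(c *: v) F a = c *: 'D_v F a.
Proof. by move=> dF; rewrite !deriveE // linearZ. Qed.

Lemma near_neq0 (x : V) : x != 0 -> \forall y \near x, y != 0.
Proof.
by move=> x0; apply: (@cvgr_neq0 _ _ _ (nbhs x) _ id x) => //; exact: cvg_id.
Qed.

End DirectionalDerivative.

Section Gradient.
Variables (R : realType) (d : nat).
Implicit Types (L : 'rV[R]_d -> R) (x v : 'rV[R]_d).

Lemma derive_partials (W : normedModType R) (F : 'rV[R]_d -> W) a v :
  differentiable F a -> 'D_v F a = \sum_i v 0 i *: 'D_(ebasis R i) F a.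
Proof.
move=> dF; rewrite deriveE // {1}(row_sum_delta v) linear_sum.
by apply: eq_bigr => i _; rewrite linearZ /= deriveE.
Qed.

Lemma dotp_grad L x v : differentiable L x -> dotp v (grad L x) = 'D_v L x.
Proof.
by move=> dL; rewrite derive_partials //; apply: eq_bigr => i _; rewrite mxE.
Qed.

Lemma hess_mulmx L x v :
  (forall i, differentiable (fun y => 'D_(ebasis R i) L y) x) ->
  v *m (hess L x)^T = \row_i 'D_v (fun y => 'D_(ebasis R i) L y) x.
Proof.
move=> dL; apply/rowP => i; rewrite !mxE derive_partials //.
by apply: eq_bigr => j _; rewrite !mxE.
Qed.

End Gradient.

Section SpectralNorm.
Variables (R : realType) (d : nat).
Implicit Types (A : 'M[R]_d) (u : 'rV[R]_d).

Lemma enorm_mulmx_le_rowsum A u : enorm u = 1 ->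
  enorm (u *m A^T) <= Num.sqrt (\sum_j (\sum_i `|A j i|) ^+ 2).
Proof.
move=> u1; apply: ler_wsqrtr; apply: ler_sum => j _.
have uAj : `|(u *m A^T) 0 j| <= \sum_i `|A j i|.
  rewrite !mxE; apply: le_trans (ler_norm_sum _ _ _) _; apply: ler_sum => i _.
  by rewrite mxE normrM ler_piMl ?enorm1_coord_le1.
rewrite -(real_normK (num_real ((u *m A^T) 0 j))).
by have := normr_ge0 ((u *m A^T) 0 j); nra.
Qed.

Lemma has_ubound_specnorm A :
  has_ubound [set enorm (u *m A^T) | u in [set u | enorm u = 1]].
Proof.
by exists (Num.sqrt (\sum_j (\sum_i `|A j i|) ^+ 2)) => _ [u /= u1 <-];
  exact: enorm_mulmx_le_rowsum.
Qed.

Lemma enorm_mulmx_le_specnorm A u :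
  enorm u = 1 -> enorm (u *m A^T) <= specnorm A.
Proof. by move=> u1; apply: (ub_le_sup (has_ubound_specnorm A)); exists u. Qed.

Lemma specnorm_le_rowsum A : (0 < d)%N ->
  specnorm A <= Num.sqrt (\sum_j (\sum_i `|A j i|) ^+ 2).
Proof.
move=> d0; apply: ge_sup.
  by exists (enorm (ebasis R (Ordinal d0) *m A^T)), (ebasis R (Ordinal d0)) => //=;
    rewrite enorm_ebasis.
by move=> _ [u /= u1 <-]; exact: enorm_mulmx_le_rowsum.
Qed.

Lemma specnorm_ge0 A : (0 < d)%N -> 0 <= specnorm A.
Proof.
move=> d0; apply: le_trans (enorm_ge0 (ebasis R (Ordinal d0) *m A^T)) _.
by apply: enorm_mulmx_le_specnorm; rewrite enorm_ebasis.
Qed.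

Lemma dotp_mulmx_le_specnorm A u : dotp u (u *m A^T) <= enorm u ^+ 2 * specnorm A.
Proof.
have [->|u0] := eqVneq u 0; first by rewrite dotp0l enorm0 expr0n mul0r.
have n0 : 0 < enorm u by rewrite enorm_gt0.
set w := (enorm u)^-1 *: u.
have uw : u = enorm u *: w by rewrite /w scalerA mulfV ?gt_eqF // scale1r.
rewrite {1 2}uw -scalemxAl dotpZl dotpZr mulrA -expr2 ler_pM2l ?exprn_gt0 //.
apply: le_trans (dotp_le_enorm _ _) _.
by rewrite /w enorm_normalize // mul1r enorm_mulmx_le_specnorm ?enorm_normalize.
Qed.

End SpectralNorm.

Section CurvatureBound.
Variables (R : realType) (d : nat) (L : 'rV[R]_d -> R).
Hypothesis CL : C2_off0 L.

Lemma has_ubound_rho :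
  has_ubound [set specnorm (hess L x) | x in [set x : 'rV[R]_d | enorm x = 1]].
Proof.
have [d0|d_gt0] := posnP d.
  exists 0 => y [x x1 _]; have : x != 0 by rewrite -enorm_gt0 x1.
  by move/dim_gt0_rV; rewrite d0.
set K := [set x : 'rV[R]_d | enorm x = 1].
have cH : compact (hess L @` K).
  apply: continuous_compact; last exact: compact_unit_sphere.
  apply/continuous_in_subspaceT => x /[1!inE] x1.
  have x0 : x != 0 by rewrite -enorm_gt0 x1.
  by case/CL: x0.
have [M [_ HM]] := compact_bounded cH.
exists (Num.sqrt (\sum_(j < d) (\sum_(i < d) (M + 1)) ^+ 2)) => _ [y Ky <-].
apply: le_trans (specnorm_le_rowsum _ d_gt0) _.
apply: ler_wsqrtr; apply: ler_sum => j _.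
have hy i : `|hess L y j i| <= M + 1.
  apply: le_trans (HM (M + 1) _ _ (imageP _ Ky)); last by rewrite ltrDl.
  rewrite [leRHS]/Num.Def.normr /= mx_normrE; apply/bigmax_geP; right => /=.
  by exists (j, i).
have s0 : 0 <= \sum_i `|hess L y j i| by exact: sumr_ge0.
have sM : \sum_i `|hess L y j i| <= \sum_(i < d) (M + 1) by exact: ler_sum.
nra.
Qed.

Lemma specnorm_hess_le_rho y : enorm y = 1 -> specnorm (hess L y) <= rho L.
Proof. by move=> y1; apply: (ub_le_sup has_ubound_rho); exists y. Qed.

Lemma rho_ge0 : (0 < d)%N -> 0 <= rho L.
Proof.
move=> d0; apply: le_trans (specnorm_ge0 (hess L (ebasis R (Ordinal d0))) d0) _.
by apply: specnorm_hess_le_rho; rewrite enorm_ebasis.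
Qed.

End CurvatureBound.

Section ScaleInvariant.
Variables (R : realType) (d : nat) (L : 'rV[R]_d -> R).
Hypothesis sL : scale_invariant L.

Lemma derive_scale_invariant (c : R) w v : 0 < c -> w != 0 ->
  differentiable L (c *: w) -> 'D_v L (c *: w) = c^-1 * 'D_v L w.
Proof.
move=> c0 w0 dL.
have -> : 'D_v L w = 'D_v (fun y => L (c *: y)) w.
  by apply: near_eq_derive; near=> y; rewrite sL //; near: y; exact: near_neq0 w0.
by rewrite derive_compZ derive_dirZ // mulrA mulVf ?gt_eqF // mul1r.
Unshelve. all: by end_near. Qed.

Lemma dotp_grad_self x : x != 0 -> differentiable L x -> dotp x (grad L x) = 0.
Proof.
move=> x0 dL; rewrite dotp_grad //.
(* Along the ray through [x], [L] is constant. *)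
have -> : 'D_x L x = 'D_1 (fun t : R => L (x + t *: x)) 0.
  by rewrite derive_line scale0r addr0.
transitivity ('D_1 (cst (L x) : R -> R) 0); last exact: derive_cst.
apply: near_eq_derive; near=> t.
have t1 : -1 < t by near: t; exact: (lt_nbhsr (ltrN10 R)).
by rewrite /cst -{1}(scale1r x) -scalerDl sL //; lra.
Unshelve. all: by end_near. Qed.

Hypothesis CL : C2_off0 L.

Lemma hessZ (c : R) y :
  0 < c -> y != 0 -> hess L (c *: y) = (c ^+ 2)^-1 *: hess L y.
Proof.
move=> c0 y0; apply/matrixP => i j; rewrite !mxE.
set p := fun w => 'D_(ebasis R i) L w.
have dp (w : 'rV[R]_d) : w != 0 -> differentiable p w by case/CL => _ + _; apply.
have cw0 (w : 'rV[R]_d) : w != 0 -> c *: w != 0.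
  by move=> w0; rewrite scaler_eq0 negb_or gt_eqF.
(* Each partial derivative [p] is homogeneous of degree -1. *)
have : 'D_(ebasis R j) (fun w => p (c *: w)) y = 'D_(ebasis R j) (c^-1 \*: p) y.
  apply: near_eq_derive; near=> w.
  have w0 : w != 0 by near: w; exact: near_neq0 y0.
  by rewrite /p /= derive_scale_invariant //; case/CL: (cw0 w w0).
rewrite derive_compZ derive_dirZ; last exact/dp/cw0.
rewrite deriveZ; last exact/diff_derivable/dp.
move=> E; apply: (mulfI (lt0r_neq0 c0)); rewrite -[LHS]/(c *: _) E.
rewrite -[_ *: 'D_(ebasis R j) p y]/(c^-1 * 'D_(ebasis R j) p y).
by field; rewrite gt_eqF.
Unshelve. all: by end_near. Qed.

Lemma dotp_hess_le_rho z v : z != 0 ->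
  dotp v (v *m (hess L z)^T) <= rho L * enorm v ^+ 2 / enorm z ^+ 2.
Proof.
move=> z0; have n0 : 0 < enorm z by rewrite enorm_gt0.
set w := (enorm z)^-1 *: z.
have w1 : enorm w = 1 by exact: enorm_normalize.
have zw : z = enorm z *: w by rewrite /w scalerA mulfV ?gt_eqF // scale1r.
have -> : (hess L z)^T = (enorm z ^+ 2)^-1 *: (hess L w)^T.
  by rewrite {1}zw hessZ -?enorm_gt0 ?w1 //; apply/matrixP => i j; rewrite !mxE.
rewrite -scalemxAr dotpZr.
have -> : rho L * enorm v ^+ 2 / enorm z ^+ 2 =
          (enorm z ^+ 2)^-1 * (enorm v ^+ 2 * rho L).
  by rewrite mulrC [rho L * _]mulrC.
rewrite ler_wpM2l ?invr_ge0 ?sqr_ge0 //.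
apply: le_trans (dotp_mulmx_le_specnorm _ _) _.
by rewrite ler_wpM2l ?sqr_ge0 ?specnorm_hess_le_rho.
Qed.

Lemma scale_invariant_step_le (x v : 'rV[R]_d) (s : R) :
  x != 0 -> dotp x v = 0 -> 0 <= s ->
  L (x + s *: v) <= L x + 'D_v L x * s
                    + rho L * enorm v ^+ 2 / enorm x ^+ 2 * s ^+ 2 / 2.
Proof.
move=> x0 xv s0.
have xtv t : dotp x (t *: v) = 0 by rewrite dotpZr xv mulr0.
have z0 t : x + t *: v != 0 by exact: orth_addr_neq0.
set f' := fun t : R => 'D_v L (x + t *: v).
set f'' := fun t : R => dotp v (v *m (hess L (x + t *: v))^T).
have df (t : R) : is_derive t 1 (fun t => L (x + t *: v)) (f' t).
  by case/CL: (z0 t) => dL _ _; exact/is_derive_line/diff_derivable.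
have df' (t : R) : is_derive t 1 f' (f'' t).
  case/CL: (z0 t) => _ dp _.
  have -> : f' = \sum_i (fun u : R => v 0 i * 'D_(ebasis R i) L (x + u *: v)).
    apply/funext => u; rewrite fct_sumE /f'.
    by case/CL: (z0 u) => dL _ _; exact: derive_partials.
  have -> : f'' t = \sum_i v 0 i * 'D_v (fun y => 'D_(ebasis R i) L y) (x + t *: v).
    by rewrite /f'' hess_mulmx //; apply: eq_bigr => i _; rewrite mxE.
  apply: is_derive_sum => i; apply: is_deriveZ.
  exact/is_derive_line/diff_derivable.
have f''_le (t : R) : f'' t <= rho L * enorm v ^+ 2 / enorm x ^+ 2.
  apply: le_trans (dotp_hess_le_rho _ (z0 t)) _.
  rewrite ler_wpM2l ?mulr_ge0 ?rho_ge0 ?(dim_gt0_rV x0) ?sqr_ge0 ?enorm_ge0 //.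
  rewrite lef_pV2 ?posrE ?exprn_gt0 ?enorm_gt0 //.
  by rewrite enorm_sqrD_orth // lerDl sqr_ge0.
have := taylor2_le df df' (fun t _ => f''_le t) s0.
by rewrite /f' scale0r addr0.
Qed.

End ScaleInvariant.

Lemma step_coef_le (R : realFieldType) (r e X a : R) :
  0 <= r -> 0 < e -> 0 < X -> 0 <= a <= 2^-1 ->
  1 - 2 * r * e / X <= (1 - a)^-1 - r * e / (2 * X * (1 - a) ^+ 2).
Proof.
move=> r0 e0 X0 /andP[a0]; rewrite -div1r => a2.
have b0 : 0 < 1 - a by lra.
set u := (1 - a)^-1; set k := r * e / X.
have k0 : 0 <= k by rewrite /k !(divr_ge0, mulr_ge0) // ltW.
have ub : u * (1 - a) = 1 by rewrite mulVf ?gt_eqF.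
have u1 : 1 <= u by nra.
have u2 : u <= 2 by nra.
have -> : r * e / (2 * X * (1 - a) ^+ 2) = k * u ^+ 2 / 2.
  by rewrite /k /u; field; rewrite !gt_eqF.
have -> : 2 * r * e / X = 2 * k by rewrite /k; ring.
have : 0 <= k * (4 - u ^+ 2) by apply: mulr_ge0 => //; nra.
lra.
Qed.

Theorem mainTheorem2 (R : realType) (d : nat) (L : 'rV[R]_d -> R)
  (eta lambda : R) (xt xt1 : 'rV[R]_d) :
  C2_off0 L -> scale_invariant L ->
  0 < eta -> 0 < lambda -> eta * lambda < 1 ->
  xt != 0 ->
  xt1 = (1 - eta * lambda) *: xt - eta *: grad L xt ->
  L xt - L xt1 >=
    eta * ((1 - eta * lambda)^-1
           - rho L * eta / (2 * enorm xt ^+ 2 * (1 - eta * lambda) ^+ 2))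
        * enorm (grad L xt) ^+ 2
  /\
  (eta * lambda <= 2^-1 ->
   L xt - L xt1 >=
     eta * (1 - 2 * rho L * eta / enorm xt ^+ 2) * enorm (grad L xt) ^+ 2).
Proof.
move=> CL sL eta0 lambda0 el1 x0 ->.
set g := grad L xt; set b := 1 - eta * lambda; set c := eta / b.
have b0 : 0 < b by rewrite subr_gt0.
have [dL _ _] := CL xt x0.
have xg : dotp xt (- g) = 0 by rewrite dotpNr dotp_grad_self // oppr0.
have -> : b *: xt - eta *: g = b *: (xt + c *: - g).
  by rewrite scalerDr scalerA scalerN /c mulrC divfK ?gt_eqF.
rewrite sL ?orth_addr_neq0 ?dotpZr ?xg ?mulr0 //.
have := scale_invariant_step_le sL CL x0 xg (divr_ge0 (ltW eta0) (ltW b0)).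
rewrite -dotp_grad // dotpNl -enorm_sqr enormN -/c => step.
have descent : eta * (b^-1 - rho L * eta / (2 * enorm xt ^+ 2 * b ^+ 2)) *
               enorm g ^+ 2 <= L xt - L (xt + c *: - g).
  suff -> : eta * (b^-1 - rho L * eta / (2 * enorm xt ^+ 2 * b ^+ 2)) * enorm g ^+ 2
    = c * enorm g ^+ 2 - rho L * enorm g ^+ 2 / enorm xt ^+ 2 * c ^+ 2 / 2 by lra.
  by rewrite /c; field; rewrite !gt_eqF ?enorm_gt0.
split=> // half; apply: le_trans descent.
apply: ler_wpM2r; first exact: sqr_ge0.
apply: ler_wpM2l; first exact: ltW.
apply: step_coef_le => //; first exact: rho_ge0 (dim_gt0_rV x0).
  by rewrite exprn_gt0 ?enorm_gt0.
by rewrite half ltW ?mulr_gt0.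
Qed.
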